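(* Let $X$ be a Banach space and $\bar x\in X$. Suppose $F:X\rightrightarrows Y$ is upper $K$-convex and that $F(x)$ is $K$-sequentially compact for all $x$ in a neighborhood of $\bar x$, and that $D_Y$ is $K$-closed. Then $$\partial F(\bar x)=\{T\in B(X,Y)\mid F(x)\subset F(\bar x)+T(x-\bar x)+K\ \text{ for all }x\in X\}.$$
   Context: $Y$ is a real normed space; $B(X,Y)$ is the space of bounded linear operators $X\to Y$; $B(x,\delta)$ is the open ball and $D_Y$ the closed unit ball. $K\subset Y$ is a pointed closed convex cone. Set-valued maps have nonempty values; $\operatorname{Epi}F(x)=F(x)+K$; $e(A,B)=\sup_{a\in A}\inf_{b\in B}\|a-b\|$. The Fréchet subdifferential $\widehat\partial F(\bar x)$ is the set of all $T\in B(X,Y)$ such that for every $\varepsilon>0$ there is $\delta>0$ with $F(x)+K\subset F(\bar x)+K+T(x-\bar x)+\varepsilon\|x-\bar x\|D_Y$ for all $x\in B(\bar x,\delta)$. The limiting subdifferential $\partial F(\bar x)$ is the set of all $T\in B(X,Y)$ for which there exist $x_n\to\bar x$ with $e(\operatorname{Epi}F(x_n),\operatorname{Epi}F(\bar x))\to0$ and $T_n\in\widehat\partial F(x_n)$ with $T_n(x)\to T(x)$ for every $x\in X$. $F$ is upper $K$-convex if $\lambda F(x)+(1-\lambda)F(y)\subset F(\lambda x+(1-\lambda)y)+K$ for all $x,y\in X$, $\lambda\in(0,1)$. A nonempty $A\subset Y$ is $K$-sequentially compact if for every $(a_n)\subset A$ there is $(c_n)\subset K$ such that $(a_n-c_n)$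 has a subsequence converging to an element of $A$. $D_Y$ is $K$-closed means $D_Y+K$ is closed. *)

From HB Require Import structures.
From mathcomp Require Import all_boot all_order all_algebra.
From mathcomp Require Import all_classical all_reals all_analysis.
Set Implicit Arguments. Unset Strict Implicit. Unset Printing Implicit Defensive.
Import Order.TTheory GRing.Theory Num.Theory.
Import numFieldNormedType.Exports.
Local Open Scope classical_set_scope.
Local Open Scope ring_scope.

Section Defs.
Variable R : realType.

Definition mink_sum (Y : normedModType R) (A B : set Y) : set Y :=
  [set a + b | a in A & b in B].

Definition pointed_closed_convex_cone (Y : normedModType R) (K : set Y) : Prop :=
  [/\ K 0,
      (forall (t : R) (k : Y), 0 <= t -> K k -> K (t *: k)),
      (forall (l : R) (a b : Y), 0 <= l <= 1 -> K a -> K b -> K (l *: a + (1 - l) *: b)),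
      closed K &
      (forall k : Y, K k -> K (- k) -> k = 0)].

Definition is_blin (X Y : normedModType R) (T : X -> Y) : Prop :=
  linear T /\ continuous T.

Definition Epi (X Y : normedModType R) (K : set Y) (F : X -> set Y) (x : X) : set Y :=
  mink_sum (F x) K.

Definition excess (Y : normedModType R) (A B : set Y) : \bar R :=
  ereal_sup [set ereal_inf [set (`|a - b|)%:E | b in B] | a in A].

Definition frechet_subdiff (X Y : normedModType R) (K : set Y) (F : X -> set Y) (xb : X)
  : set (X -> Y) :=
  [set T | is_blin T /\
     forall eps : R, 0 < eps -> exists2 delta : R, 0 < delta &
       forall x : X, `|x - xb| < delta ->
         Epi K F x `<=`
         mink_sum (mink_sum (Epi K F xb) [set T (x - xb)])
              [set y : Y | `|y| <= eps * `|x - xb|]].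

Definition limiting_subdiff (X Y : normedModType R) (K : set Y) (F : X -> set Y) (xb : X)
  : set (X -> Y) :=
  [set T | is_blin T /\
     exists xs : nat -> X, exists Ts : nat -> (X -> Y),
       [/\ xs @ \oo --> xb,
           (fun n => excess (Epi K F (xs n)) (Epi K F xb)) @ \oo --> 0%E,
           (forall n, frechet_subdiff K F (xs n) (Ts n)) &
           (forall x : X, (fun n => Ts n x) @ \oo --> T x)]].

Definition upper_K_convex (X Y : normedModType R) (K : set Y) (F : X -> set Y) : Prop :=
  forall (x y : X) (l : R), 0 < l < 1 ->
    [set l *: a + (1 - l) *: b | a in F x & b in F y]
      `<=` mink_sum (F (l *: x + (1 - l) *: y)) K.

Definition K_seq_compact (Y : normedModType R) (K : set Y) (A : set Y) : Prop :=
  A !=set0 /\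
  forall a : nat -> Y, (forall n, A (a n)) ->
    exists c : nat -> Y, (forall n, K (c n)) /\
      exists phi : nat -> nat, {homo phi : m n / (m < n)%N >-> (m < n)%N} /\
        exists2 l : Y, A l & (fun n => a (phi n) - c (phi n)) @ \oo --> l.

Definition unit_ball_K_closed (Y : normedModType R) (K : set Y) : Prop :=
  closed (mink_sum [set y : Y | `|y| <= 1] K).

End Defs.

(* For upper K-convex F, a Fréchet subgradient S at u is global up to closure:
   if y ∈ F(x), convexity at u + λ(x - u) together with the Fréchet estimate
   there shows that the relaxation e ↦ λ(y - S(x - u)) + (1 - λ)e maps
   Epi F(u) into itself up to an error λε|x - u|, and iterating it brings
   Epi F(u) within ε of y - S(x - u).
   For a limiting subgradient T = lim T_n with T_n Fréchet at x_n, the T_n are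
   equibounded by Banach–Steinhaus, so T_n(x - x_n) → T(x - x̄); since
   e(Epi F(x_n), Epi F(x̄)) → 0, y - T(x - x̄) is a limit of points of
   Epi F(x̄), which is sequentially closed because F(x̄) is K-sequentially
   compact and K is closed.  Conversely a global subgradient is a Fréchet
   subgradient at x̄ itself, hence a limiting one along constant sequences. *)

From HB Require Import structures.
From mathcomp Require Import all_boot all_order all_algebra.
From mathcomp Require Import all_classical all_reals all_analysis.
From mathcomp Require Import ring lra.
Import Order.TTheory GRing.Theory Num.Theory.
Import numFieldNormedType.Exports.
Local Open Scope classical_set_scope.
Local Open Scope ring_scope.
Set Implicit Arguments. Unset Strict Implicit.

Section LinearFun.
Variables (R : realType) (X Y : normedModType R) (f : X -> Y).
Hypothesis f_linear : linear f.

Let f_lin : {linear X -> Y} := HB.pack f (GRing.isLinear.Build _ _ _ _ _ f_linear).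

Lemma linear_fun0 : f 0 = 0.
Proof. exact: (linear0 f_lin). Qed.

Lemma linear_funD u v : f (u + v) = f u + f v.
Proof. exact: (linearD f_lin). Qed.

Lemma linear_funZ (a : R) v : f (a *: v) = a *: f v.
Proof. exact: (linearZ_LR f_lin). Qed.

Lemma linear_fun_bounded :
  continuous f -> forall r, exists M, forall x, `|x| <= r -> `|f x| <= M.
Proof.
by move=> f_cont; apply/(bounded_funP f_lin)/(linear_bounded_continuous f_lin).
Qed.

End LinearFun.

Lemma cvg_subseq (T : topologicalType) (e : nat -> T) (phi : nat -> nat) (w : T) :
  {homo phi : m n / (m < n)%N} -> e @ \oo --> w -> (fun n => e (phi n)) @ \oo --> w.
Proof.
move=> phi_incr; apply: cvg_comp; apply/cvgnyPge => N; exists N => // n /= Nn.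
apply: leq_trans Nn _; elim: n => // n IHn; exact: leq_ltn_trans IHn (phi_incr _ _ _).
Qed.

Section NormedSpace.
Variables (R : realType) (Y : normedModType R).

Lemma mink_sumP (A B : set Y) z :
  mink_sum A B z -> exists a b, [/\ A a, B b & z = a + b].
Proof. by case=> a Aa [b Bb <-]; exists a, b. Qed.

Lemma mem_mink_sum (A B : set Y) a b : A a -> B b -> mink_sum A B (a + b).
Proof. by move=> Aa Bb; exists a => //; exists b. Qed.

Section Cone.
Variable K : set Y.
Hypothesis Kcone : pointed_closed_convex_cone K.

Lemma cone0 : K 0.
Proof. by case: Kcone. Qed.

Lemma coneD a b : K a -> K b -> K (a + b).
Proof.
case: Kcone => _ Kscale Kconv _ _ Ka Kb.
have Kmid : K (2^-1 *: a + (1 - 2^-1) *: b).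
  by apply: Kconv => //; apply/andP; split; lra.
have := Kscale 2 _ (ler0n _ 2) Kmid.
have -> : (1 - 2^-1 : R) = 2^-1 by lra.
by rewrite scalerDr !scalerA mulfV ?pnatr_eq0 // !scale1r.
Qed.

Lemma mink_sum_cone0 (A : set Y) a : A a -> mink_sum A K a.
Proof. by move=> Aa; rewrite -[a]addr0; apply: mem_mink_sum; last exact: cone0. Qed.

Lemma mink_sum_cvg_closed (A : set Y) (e : nat -> Y) (w : Y) :
  K_seq_compact K A -> (forall n, mink_sum A K (e n)) -> e @ \oo --> w ->
  mink_sum A K w.
Proof.
move=> [_ Aseq] AKe e_w.
have /choice[a Ha] : forall n, exists a, A a /\ K (e n - a).
  move=> n; have [a [k [Aa Kk ->]]] := mink_sumP (AKe n).
  by exists a; rewrite addrAC subrr add0r.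
have [c [Kc [phi [phi_incr [l Al al]]]]] := Aseq a (fun n => (Ha n).1).
have ephi := cvg_subseq phi_incr e_w.
have Kwl : K (w - l).
  have Kclosed : closed K by case: Kcone.
  have : (fun n => e (phi n) - (a (phi n) - c (phi n))) @ \oo --> w - l.
    exact: cvgB.
  apply: closed_cvg => //; apply: nearW => n; rewrite opprB addrCA addrC.
  by apply: coneD; [exact: (Ha (phi n)).2 | exact: Kc].
by rewrite -(subrK l w) addrC; apply: mem_mink_sum.
Qed.

End Cone.

Lemma approx_cvg (E : set Y) (w : Y) :
  (forall eps, 0 < eps -> exists2 e, E e & `|w - e| < eps) ->
  exists2 e : nat -> Y, (forall n, E (e n)) & e @ \oo --> w.
Proof.
move=> Ew.
have /choice[e He] : forall n, exists e, E e /\ `|w - e| < harmonic n.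
  by move=> n; have [e ? ?] := Ew _ (harmonic_gt0 n); exists e.
exists e => [n|]; first exact: (He n).1.
apply/cvgrPdist_lt => eps eps0.
have /cvgr_dist_lt /(_ eps eps0) [N _ HN] := @cvg_harmonic R.
exists N => // n /= Nn; apply: lt_trans (He n).2 _.
by have := HN n Nn; rewrite sub0r normrN ger0_norm ?harmonic_ge0.
Qed.

Lemma relaxation_approx (E : set Y) (w e0 : Y) (lam c : R) :
  0 < lam < 1 -> E e0 ->
  (forall e, E e ->
     exists2 e', E e' & `|e' - (lam *: w + (1 - lam) *: e)| <= lam * c) ->
  forall eps, c < eps -> exists2 e, E e & `|e - w| < eps.
Proof.
move=> /andP[lam0 lam1] Ee0 relax eps c_eps.
have c0 : 0 <= c.
  have [e' _ /(le_trans (normr_ge0 _))] := relax e0 Ee0.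
  by rewrite pmulr_rge0.
have iter m : exists2 e, E e & `|e - w| <= (1 - lam) ^+ m * `|e0 - w| + c.
  elim: m => [|m [e Ee He]]; first by exists e0; rewrite // expr0 mul1r lerDl.
  have [e' Ee' He'] := relax e Ee; exists e' => //.
  have -> : e' - w = (e' - (lam *: w + (1 - lam) *: e)) + (1 - lam) *: (e - w).
    rewrite scalerBr !scalerBl !scale1r opprD addrA.
    by rewrite [e' + (- _ - _)]addrA subrK opprB addrA subrK.
  rewrite (le_trans (ler_normD _ _)) // normrZ ger0_norm; last by rewrite subr_ge0 ltW.
  have He1 : (1 - lam) * `|e - w| <= (1 - lam) * ((1 - lam) ^+ m * `|e0 - w| + c).
    by rewrite ler_wpM2l // subr_ge0 ltW.
  have -> : (1 - lam) ^+ m.+1 * `|e0 - w| + c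
          = lam * c + (1 - lam) * ((1 - lam) ^+ m * `|e0 - w| + c) by rewrite exprS; ring.
  exact: lerD.
have [m Hm] : exists m, (1 - lam) ^+ m * `|e0 - w| < eps - c.
  have q1 : `|1 - lam| < 1 by rewrite ger0_norm; lra.
  have : (fun n => (1 - lam) ^+ n * `|e0 - w|) @ \oo --> 0 * `|e0 - w|.
    exact: cvgM (cvg_expr q1) (cvg_cst _).
  rewrite mul0r => /cvgr_dist_lt /(_ (eps - c)) [|N _ HN]; first by rewrite subr_gt0.
  exists N; have := HN N (leqnn N).
  by rewrite sub0r normrN => /(le_lt_trans (ler_norm _)).
by have [e Ee He] := iter m; exists e => //; lra.
Qed.

Lemma excess_lt_approx (A B : set Y) (eps : R) a :
  (excess A B < eps%:E)%E -> A a -> exists2 b, B b & `|a - b| < eps.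
Proof.
move=> AB_eps Aa.
have : (ereal_inf [set (`|a - b|)%:E | b in B] < eps%:E)%E.
  by apply: le_lt_trans AB_eps; apply: ereal_sup_ubound; exists a.
by case/ereal_inf_lt => _ [b Bb <-]; rewrite lte_fin; exists b.
Qed.

Lemma excess_refl (A : set Y) : A !=set0 -> excess A A = 0%E.
Proof.
move=> [a0 Aa0]; rewrite /excess -[0%E]ereal_sup1; congr ereal_sup.
have inf0 a : A a -> ereal_inf [set (`|a - b|)%:E | b in A] = 0%E.
  move=> Aa; apply/eqP; rewrite eq_le; apply/andP; split.
    by apply: ereal_inf_lbound; exists a => //; rewrite subrr normr0.
  by apply: le_ereal_inf_tmp => _ [b _ <-]; rewrite lee_fin.
apply/seteqP; split => [_ [a Aa <-]|_ ->]; first exact: inf0.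
by exists a0 => //; exact: inf0.
Qed.

Lemma pointwise_cvg_equibounded (X : completeNormedModType R)
    (Ts : nat -> X -> Y) (T : X -> Y) :
  (forall n, is_blin (Ts n)) -> (forall x, Ts ^~ x @ \oo --> T x) ->
  exists2 M, 0 < M & forall n v, `|Ts n v| <= M * `|v|.
Proof.
move=> Ts_blin Ts_T.
have : uniform_bounded (range Ts).
  apply: Banach_Steinhauss.
    move=> _ [n _ <-]; have [Ln Cn] := Ts_blin n.
    by split => //; exact: linear_fun_bounded.
  move=> x; have [M [_ HM]] := cvg_seq_bounded (cvgP _ (Ts_T x)).
  by exists (M + 1) => _ [n _ <-]; apply: (HM (M + 1)) => //; rewrite ltrDl.
move=> /(_ 1) [M HM]; exists (`|M| + 1) => [|n v]; first by rewrite ltr_wpDl.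
have [Ln _] := Ts_blin n.
have [->|v0] := eqVneq v 0; first by rewrite linear_fun0 // !normr0 mulr0.
have nv0 : 0 < `|v| by rewrite normr_gt0.
have : `|Ts n (`|v|^-1 *: v)| <= M.
  apply: (HM (Ts n)); first by exists n.
  by rewrite normrZ ger0_norm ?invr_ge0 // mulVf // gt_eqF.
rewrite linear_funZ // normrZ ger0_norm ?invr_ge0 // ler_pdivrMl // => /le_trans.
by apply; rewrite [leRHS]mulrC ler_wpM2l // (le_trans (ler_norm M)) // lerDl.
Qed.

Lemma equibounded_cvg_eval (X : normedModType R) (Ts : nat -> X -> Y) (T : X -> Y)
    (M : R) (vs : nat -> X) (v : X) :
  (forall n, linear (Ts n)) -> 0 < M -> (forall n u, `|Ts n u| <= M * `|u|) ->
  (forall u, Ts ^~ u @ \oo --> T u) -> vs @ \oo --> v ->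
  (fun n => Ts n (vs n)) @ \oo --> T v.
Proof.
move=> Ts_lin M0 Ts_M Ts_T vs_v.
have -> : (fun n => Ts n (vs n)) = (fun n => Ts n v + Ts n (vs n - v)).
  by apply/funext => n; rewrite -linear_funD // addrC subrK.
rewrite -[T v]addr0; apply: cvgD; first exact: Ts_T.
apply/cvgrPdist_lt => e e0.
have /cvgr_dist_lt /(_ (e / M)) [|N _ HN] := vs_v; first by rewrite divr_gt0.
exists N => // n /= Nn; rewrite sub0r normrN (le_lt_trans (Ts_M n _)) //.
by rewrite mulrC -ltr_pdivlMr // distrC; exact: HN.
Qed.

End NormedSpace.

Section FrechetSubdiff.
Variables (R : realType) (X Y : normedModType R) (K : set Y) (F : X -> set Y).
Hypotheses (Kcone : pointed_closed_convex_cone K) (Fconv : upper_K_convex K F).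

Lemma frechet_relaxation_step (u x : X) (y : Y) (S : X -> Y) (ep delta lam : R) :
  linear S ->
  (forall z, `|z - u| < delta -> Epi K F z `<=`
     mink_sum (mink_sum (Epi K F u) [set S (z - u)]) [set v | `|v| <= ep * `|z - u|]) ->
  0 < lam < 1 -> lam * `|x - u| < delta -> F x y ->
  forall e, Epi K F u e -> exists2 e', Epi K F u e' &
    `|e' - (lam *: (y - S (x - u)) + (1 - lam) *: e)| <= lam * (ep * `|x - u|).
Proof.
move=> S_lin S_frechet lam01 lam_delta Fxy _ /mink_sumP[f [k [Ff Kk ->]]].
have /andP[lam0 lam1] := lam01.
pose z := lam *: x + (1 - lam) *: u.
have zu : z - u = lam *: (x - u).
  by rewrite /z scalerBr scalerBl scale1r addrA addrAC addrK.
have [g [k1 [Fzg Kk1 Eg]]] : exists g k1,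
    [/\ F z g, K k1 & lam *: y + (1 - lam) *: f = g + k1].
  by apply: mink_sumP; apply: Fconv => //; exists y => //; exists f.
have Epi_z : Epi K F z (lam *: y + (1 - lam) *: (f + k)).
  rewrite scalerDr addrA Eg -addrA; apply: mem_mink_sum => //.
  apply: coneD => //; case: Kcone => _ Kscale _ _ _.
  by apply: Kscale; rewrite // subr_ge0 ltW.
have zu_delta : `|z - u| < delta by rewrite zu normrZ gtr0_norm.
have [q [d [uq dle Eq]]] := mink_sumP (S_frechet z zu_delta _ Epi_z).
have [e' [s [Ee' s_def q_def]]] := mink_sumP uq.
exists e' => //.
have -> : e' - (lam *: (y - S (x - u)) + (1 - lam) *: (f + k)) = - d.
  rewrite scalerBr -(linear_funZ S_lin) -zu -s_def addrAC Eq q_def.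
  by rewrite addrAC addrK opprD addrA subrr add0r.
by rewrite normrN (le_trans dle) // zu normrZ gtr0_norm // mulrCA.
Qed.

Lemma frechet_subdiff_convex_approx (u x : X) (y : Y) (S : X -> Y) (eps : R) :
  F u !=set0 -> frechet_subdiff K F u S -> F x y -> 0 < eps ->
  exists2 e, Epi K F u e & `|e - (y - S (x - u))| < eps.
Proof.
move=> [f0 Ff0] [[S_lin _] S_frechet] Fxy eps0.
have r0 : 0 <= `|x - u| := normr_ge0 _.
(* The step size keeps u + λ(x - u) inside the Fréchet ball, and the relaxation
   error λ ε |x - u| / (|x - u| + 1) stays below λ ε. *)
have ep0 : 0 < eps / (`|x - u| + 1) by rewrite divr_gt0 // ltr_wpDl.
have [delta delta0 S_delta] := S_frechet _ ep0.
pose lam := delta / (delta + `|x - u| + 1).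
have D0 : 0 < delta + `|x - u| + 1 by rewrite -addrA ltr_wpDr // ltr_wpDl.
have lam01 : 0 < lam < 1.
  by rewrite divr_gt0 //= ltr_pdivrMr // mul1r -addrA ltrDl ltr_wpDl.
have lam_delta : lam * `|x - u| < delta.
  by rewrite /lam mulrAC ltr_pdivrMr //; nra.
apply: (relaxation_approx lam01 (mink_sum_cone0 Kcone Ff0)
  (frechet_relaxation_step S_lin S_delta lam01 lam_delta Fxy)).
by rewrite mulrAC ltr_pdivrMr ?ltr_wpDl //; nra.
Qed.

End FrechetSubdiff.

Section LimitingSubdiff.
Variables (R : realType) (X : completeNormedModType R) (Y : normedModType R).
Variables (K : set Y) (F : X -> set Y) (xb : X).
Hypotheses (Kcone : pointed_closed_convex_cone K) (Fconv : upper_K_convex K F).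
Hypothesis Fne : forall x, F x !=set0.

Lemma limiting_subgradient_approx (T : X -> Y) (x : X) (y : Y) (eps : R) :
  limiting_subdiff K F xb T -> F x y -> 0 < eps ->
  exists2 b, Epi K F xb b & `|y - T (x - xb) - b| < eps.
Proof.
move=> [_ [xs [Ts [xs_xb excess0 Ts_frechet Ts_T]]]] Fxy eps0.
have [M M0 Ts_M] := pointwise_cvg_equibounded (fun n => (Ts_frechet n).1) Ts_T.
have Ts_eval : (fun n => Ts n (x - xs n)) @ \oo --> T (x - xb).
  apply: (equibounded_cvg_eval _ M0 Ts_M Ts_T) => [n|]; first exact: (Ts_frechet n).1.1.
  exact: cvgB (cvg_cst _) xs_xb.
have e30 : 0 < eps / 3 by rewrite divr_gt0.
have /cvgr_dist_lt /(_ _ e30) [N1 _ HN1] := Ts_eval.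
have [N2 _ HN2] : \forall n \near \oo,
    (excess (Epi K F (xs n)) (Epi K F xb) < (eps / 3)%:E)%E.
  apply: (excess0 (fun z => (z < (eps / 3)%:E)%E)).
  by apply: open_ereal_lt'; rewrite lte_fin.
pose n := maxn N1 N2.
have [e1 Ee1 He1] := frechet_subdiff_convex_approx Kcone Fconv (Fne (xs n))
  (Ts_frechet n) Fxy e30.
have [b Eb Hb] := excess_lt_approx (HN2 n (leq_maxr _ _)) Ee1.
exists b => //.
have Hs : `|y - T (x - xb) - (y - Ts n (x - xs n))| < eps / 3.
  by rewrite [y - T _]addrC addrKA opprK addrC distrC; exact: HN1 (leq_maxl _ _).
rewrite distrC in He1.
have := ler_distD (y - Ts n (x - xs n)) (y - T (x - xb)) b.
have := ler_distD e1 (y - Ts n (x - xs n)) b.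
lra.
Qed.

Lemma limiting_subdiff_global (T : X -> Y) :
  K_seq_compact K (F xb) -> limiting_subdiff K F xb T ->
  forall x, F x `<=` mink_sum (mink_sum (F xb) [set T (x - xb)]) K.
Proof.
move=> Fxb_compact T_lim x y Fxy.
have [e Ee e_w] := approx_cvg (fun eps => limiting_subgradient_approx T_lim Fxy).
have [a [k [Fa Kk w_ak]]] := mink_sumP (mink_sum_cvg_closed Kcone Fxb_compact Ee e_w).
have -> : y = a + T (x - xb) + k by rewrite addrAC -w_ak subrK.
by apply: mem_mink_sum => //; apply: mem_mink_sum.
Qed.

End LimitingSubdiff.

Section GlobalSubgradient.
Variables (R : realType) (X Y : normedModType R) (K : set Y) (F : X -> set Y).
Variables (xb : X) (T : X -> Y).
Hypotheses (Kcone : pointed_closed_convex_cone K) (T_blin : is_blin T).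
Hypothesis T_global : forall x, F x `<=` mink_sum (mink_sum (F xb) [set T (x - xb)]) K.

Lemma global_subgradient_frechet : frechet_subdiff K F xb T.
Proof.
split => // eps eps0; exists 1 => // x _ _ /mink_sumP[f [k [Ff Kk ->]]].
have [q [k' [Fq Kk' ->]]] := mink_sumP (T_global Ff).
have [a [t [Fa t_def ->]]] := mink_sumP Fq.
have -> : a + t + k' + k = a + (k' + k) + t + 0 by rewrite addr0 -addrA addrAC.
apply: mem_mink_sum; last by rewrite /= normr0 mulr_ge0 // ltW.
by apply: mem_mink_sum => //; apply: mem_mink_sum => //; apply: coneD.
Qed.

Lemma global_subgradient_limiting : F xb !=set0 -> limiting_subdiff K F xb T.
Proof.
move=> [f Ff]; split => //; exists (fun=> xb), (fun=> T); split.
- exact: cvg_cst.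
- by rewrite excess_refl; [exact: cvg_cst | exists f; exact: mink_sum_cone0].
- by move=> _; exact: global_subgradient_frechet.
- by move=> v; exact: cvg_cst.
Qed.

End GlobalSubgradient.

Theorem mainTheorem9 (R : realType) (X : completeNormedModType R)
  (Y : normedModType R) (K : set Y) (F : X -> set Y) (xb : X) :
  pointed_closed_convex_cone K ->
  (forall x : X, F x !=set0) ->
  upper_K_convex K F ->
  (\forall x \near xb, K_seq_compact K (F x)) ->
  unit_ball_K_closed K ->
  limiting_subdiff K F xb =
  [set T : X -> Y | is_blin T /\
     forall x : X, F x `<=` mink_sum (mink_sum (F xb) [set T (x - xb)]) K].
Proof.
move=> Kcone Fne Fconv Fcompact _.
apply/seteqP; split => T.
- move=> T_lim; split; first exact: T_lim.1.
  exact: (limiting_subdiff_global Kcone Fconv Fne (nbhs_singleton Fcompact) T_lim).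
- by case=> T_blin T_global; apply: global_subgradient_limiting.
Qed.
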